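(* Let $\Sigma$ be the system $x(t+1)=Ax(t)+Bu(t)+Gw(t)$, $y(t)=Cx(t)+\nu(t)$ as in the context, with $x\in\mathbb R^n$, and let $R\in\mathbb R^{r\times n}$ satisfy $\mathrm{im}(\mathcal{R}each(A,G))\cap\ker(R)=\{0\}$. Then for every $t\in\mathbb N$, every initial state $x^0\in\mathbb R^n$, every input sequence $\mathbf u$ and every measurable set $\overline X\subseteq\mathrm{supp}(\mathbf x|_{x^0,\mathbf u}(t))$, $$\mathbf P(R\,\mathbf x|_{x^0,\mathbf u}(t)\in R\overline X\mid x^0)=\mathbf P(\mathbf x|_{x^0,\mathbf u}(t)\in\overline X\mid x^0).$$
   Context: $\Sigma$: $x(t+1)=Ax(t)+Bu(t)+Gw(t)$, $y(t)=Cx(t)+\nu(t)$, $t\in\mathbb N$, $x\in\mathbb R^n$, $u\in\mathbb R^m$, $w\in\mathbb R^l$, $y,\nu\in\mathbb R^p$, where $(w(t))_t$ is i.i.d. $\mathcal N(\mu,I_l)$, $(\nu(t))_t$ is i.i.d. $\mathcal N(0,\Psi)$, mutually independent. For a deterministic initial state $x^0$ and deterministic input $\mathbf u:\mathbb N\to\mathbb R^m$, $\mathbf x|_{x^0,\mathbf u}(t)=A^tx^0+\sum_{\tau=0}^{t-1}A^{t-1-\tau}(Bu(\tau)+Gw(\tau))$; $\mathbf P(\cdot\mid x^0)$ is probability for the process started at $x^0$. $\mathrm{supp}(v)=\{z:\mathbf P(v\in B_\rho(z))>0\ \forall\rho>0\}$. $\mathcal{R}each_t(A,G)=[G\ AG\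 \cdots\ A^{t-1}G]$ and $\mathcal{R}each(A,G)=\mathcal{R}each_n(A,G)$. $R\overline X=\{Rx:x\in\overline X\}$. *)

From HB Require Import structures.
From mathcomp Require Import all_boot all_order all_algebra.
From mathcomp Require Import finmap all_classical all_reals all_analysis.
Set Implicit Arguments. Unset Strict Implicit. Unset Printing Implicit Defensive.
Import Order.TTheory GRing.Theory Num.Theory.
Local Open Scope classical_set_scope.
Local Open Scope ring_scope.

Definition reach_t {R : realType} {n l : nat} (t : nat)
  (A : 'M[R]_n) (G : 'M[R]_(n, l)) : 'M[R]_(n, \sum_(k < t) l) :=
  \mxrow_(k < t) (A ^+ k *m G).

Definition reach {R : realType} {n l : nat}
  (A : 'M[R]_n) (G : 'M[R]_(n, l)) : 'M[R]_(n, \sum_(k < n) l) :=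
  reach_t n A G.

Definition noise_vec {R : realType} {T : Type} {l : nat}
  (w : nat -> 'I_l -> T -> R) (t : nat) (om : T) : 'cV[R]_l :=
  \col_(i < l) w t i om.

Definition state_traj {R : realType} {T : Type} {n m l : nat}
  (A : 'M[R]_n) (B : 'M[R]_(n, m)) (G : 'M[R]_(n, l))
  (w : nat -> 'I_l -> T -> R) (x0 : 'cV[R]_n) (u : nat -> 'cV[R]_m)
  (t : nat) (om : T) : 'cV[R]_n :=
  A ^+ t *m x0 +
  \sum_(tau < t) (A ^+ (t.-1 - tau) *m (B *m u tau + G *m noise_vec w tau om)).

Definition mutually_independent {R : realType} {d} {T : measurableType d}
  (P : probability T R) {I : choiceType} (X : I -> T -> R) : Prop :=
  (forall k, measurable_fun setT (X k)) /\
  forall (S : {fset I}) (Bs : I -> set R),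
    (forall k, k \in S -> measurable (Bs k)) ->
    P (\bigcap_(k in [set k | k \in S]) (X k @^-1` Bs k)) =
    (\prod_(k <- S) P (X k @^-1` Bs k))%E.

(* (w(t))_t i.i.d. N(mu, I_l): all scalar components w t i are mutually
   independent and w t i ~ N(mu_i, 1). *)
Definition iid_gaussian_noise {R : realType} {d} {T : measurableType d}
  (P : probability T R) {l : nat} (mu : 'cV[R]_l)
  (w : nat -> 'I_l -> T -> R) : Prop :=
  mutually_independent P (fun k : nat * 'I_l => w k.1 k.2) /\
  forall t i (B : set R), measurable B ->
    P (w t i @^-1` B) = normal_prob (mu i 0) 1 B.

Definition eball {R : realType} {n : nat} (z : 'cV[R]_n) (rho : R) : set 'cV[R]_n :=
  [set v | \sum_(i < n) (v i 0 - z i 0) ^+ 2 < rho ^+ 2].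

Definition supp {R : realType} {d} {T : measurableType d}
  (P : probability T R) {n : nat} (v : T -> 'cV[R]_n) : set 'cV[R]_n :=
  [set z | forall rho : R, 0 < rho -> (0 < P (v @^-1` eball z rho))%E].

Definition borel_boxes {R : realType} (n : nat) : set (set 'cV[R]_n) :=
  [set Bx | exists I : 'I_n -> set R,
     (forall i, measurable (I i)) /\ Bx = [set v : 'cV[R]_n | forall i, I i (v i 0)]].

Definition borel_cV {R : realType} (n : nat) (X : set 'cV[R]_n) : Prop :=
  <<s (@borel_boxes R n) >> X.

From HB Require Import structures.
From mathcomp Require Import all_boot all_order all_algebra.
From mathcomp Require Import all_classical all_reals all_analysis.
From mathcomp Require Import lra.
Import Order.TTheory GRing.Theory Num.Theory.
Local Open Scope classical_set_scope.
Local Open Scope ring_scope.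

(* The noise-driven part of x(t) is a sum of terms A^k G w, which by
   Cayley-Hamilton all lie in im Reach(A,G); hence x(t) takes values in the
   affine subspace c + im Reach(A,G), c being the noise-free trajectory.
   This affine subspace is closed, so it also contains supp x(t) and thus
   Xbar.  As R is injective on im Reach(A,G), R x(t) lands in R Xbar exactly
   when x(t) lands in Xbar: the two events coincide pointwise, whatever the
   distribution of the noise and whether or not Xbar is measurable. *)

Section ColumnSpace.
Context {F : fieldType} {n N : nat} (M : 'M[F]_(n, N)).

Definition in_colspace (x : 'cV[F]_n) : bool := (x^T <= M^T)%MS.

Lemma in_colspaceP x : reflect (exists v, x = M *m v) (in_colspace x).
Proof.
apply: (iffP submxP) => [[D eD] | [v ->]]; last by exists v^T; rewrite trmx_mul.
by exists D^T; rewrite -[x]trmxK eD trmx_mul trmxK.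
Qed.

Lemma in_colspaceB {x y : 'cV[F]_n} :
  in_colspace x -> in_colspace y -> in_colspace (x - y).
Proof.
by rewrite /in_colspace raddfB /= => xM yM; rewrite addmx_sub // eqmx_opp.
Qed.

Lemma in_colspace_sum (I : Type) (s : seq I) (X : I -> 'cV[F]_n) :
  (forall i, in_colspace (X i)) -> in_colspace (\sum_(i <- s) X i).
Proof.
move=> XM; rewrite /in_colspace raddf_sum.
by apply: summx_sub => i _; apply: XM.
Qed.

Lemma colspace_separation x : ~~ in_colspace x ->
  exists f : 'rV[F]_n, f *m M = 0 /\ (f *m x) 0 0 != 0.
Proof.
rewrite /in_colspace submxE => xK_neq0.
set K := cokermx M^T in xK_neq0 *.
have [j xKj_neq0] : exists j, (x^T *m K) 0 j != 0.
  apply/not_existsP => xK_eq0; case/eqP: xK_neq0; apply/matrixP => i j.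
  by rewrite ord1 [RHS]mxE; apply/eqP/negbNE/negP/xK_eq0.
exists (col j K)^T; split.
  apply: trmx_inj.
  by rewrite trmx_mul trmxK trmx0 colE mulmxA mulmx_coker mul0mx.
by rewrite -[x]trmxK -trmx_mul mxE colE mulmxA -colE mxE.
Qed.
End ColumnSpace.

Section EuclideanBall.
Context {R : realType} {n : nat}.

Lemma eball_coord_lt (z y : 'cV[R]_n) (rho : R) (i : 'I_n) :
  0 <= rho -> eball z rho y -> `|y i 0 - z i 0| < rho.
Proof.
move=> rho_ge0 yz.
have sq_lt : `|y i 0 - z i 0| ^+ 2 < rho ^+ 2.
  rewrite real_normK ?num_real //; apply: le_lt_trans yz.
  by rewrite (bigD1 i) //= lerDl sumr_ge0 // => j _; apply: sqr_ge0.
have := normr_ge0 (y i 0 - z i 0); nra.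
Qed.

Lemma eball_functional_le (f : 'rV[R]_n) {z y : 'cV[R]_n} {rho : R} :
  0 <= rho -> eball z rho y ->
  `|(f *m (y - z)) 0 0| <= (\sum_(i < n) `|f 0 i|) * rho.
Proof.
move=> rho_ge0 yz; rewrite mxE mulr_suml.
apply: le_trans (ler_norm_sum _ _ _) _; apply: ler_sum => i _.
rewrite normrM ler_wpM2l // !mxE ltW //; exact: eball_coord_lt.
Qed.

End EuclideanBall.

Lemma supp_sub_colspace_coset {R : realType} {d : measure_display}
    {T : measurableType d} (P : probability T R) {n N : nat}
    (M : 'M[R]_(n, N)) (c : 'cV[R]_n) (s : T -> 'cV[R]_n) :
  (forall om, in_colspace M (s om - c)) ->
  supp P s `<=` [set x | in_colspace M (x - c)].
Proof.
move=> sM x x_supp /=; apply/negPn/negP => /colspace_separation[f [fM fx_neq0]].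
set S := \sum_(i < n) `|f 0 i|.
have S_ge0 : 0 <= S by apply: sumr_ge0 => i _.
have fx_gt0 : 0 < `|(f *m (x - c)) 0 0| by rewrite normr_gt0.
(* f kills the direction of the coset, yet varies by less than |f (x - c)|
   over eball x rho. *)
pose rho := `|(f *m (x - c)) 0 0| / (1 + S).
have rho_gt0 : 0 < rho by rewrite divr_gt0 // ltr_pwDl.
suff s_eball0 : s @^-1` eball x rho = set0.
  by have := x_supp rho rho_gt0; rewrite s_eball0 measure0 ltxx.
apply/seteqP; split => // om /= /(eball_functional_le f (ltW rho_gt0)).
have /in_colspaceP[v sv] := sM om.
have -> : s om - x = M *m v - (x - c) by rewrite -sv opprB addrA subrK.
rewrite mulmxBr mulmxA fM mul0mx sub0r mxE normrN -/S /rho mulrA.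
by rewrite ler_pdivlMr ?ltr_pwDl //; nra.
Qed.

Lemma mxpow_span {F : fieldType} {n : nat} (A : 'M[F]_n) (k : nat) :
  exists a : 'I_n -> F, A ^+ k = \sum_(i < n) a i *: A ^+ i.
Proof.
case: n A => [|n] A; first by exists (fun=> 0); apply/matrixP => -[].
set r := 'X^k %% char_poly A.
have size_r : (size r <= n.+1)%N.
  by rewrite -ltnS -(size_char_poly A) ltn_modp -size_poly_eq0 size_char_poly.
exists (fun i => r`_i).
have -> : A ^+ k = horner_mx A r.
  have -> : A ^+ k = horner_mx A 'X^k by rewrite rmorphXn /= horner_mx_X.
  rewrite {1}(divp_eq 'X^k (char_poly A)) rmorphD rmorphM /= Cayley_Hamilton.
  by rewrite mulr0 add0r.
rewrite -{1}(take_poly_id size_r) /take_poly poly_def rmorph_sum /=.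
by apply: eq_bigr => i _; rewrite linearZ /= rmorphXn /= horner_mx_X.
Qed.

Section Reachability.
Context {R : realType} {n m l : nat}.
Variables (A : 'M[R]_n) (B : 'M[R]_(n, m)) (G : 'M[R]_(n, l)).

Lemma reach_block_sub (i : 'I_n) : ((A ^+ i *m G)^T <= (reach A G)^T)%MS.
Proof.
have -> : A ^+ i *m G =
    reach A G *m \mxcol_(j < n) (if j == i then 1%:M else 0 : 'M[R]_l).
  rewrite /reach /reach_t mul_mxrow_mxcol (bigD1 i) //= eqxx mulmx1.
  rewrite big1 ?addr0 //.
  by move=> j /negPf ->; rewrite mulmx0.
by rewrite trmx_mul submxMl.
Qed.

Lemma reach_pow_sub k : ((A ^+ k *m G)^T <= (reach A G)^T)%MS.
Proof.
have [a ->] := mxpow_span A k.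
rewrite mulmx_suml raddf_sum /=; apply: summx_sub => i _.
by rewrite -scalemxAl linearZ /= scalemx_sub ?reach_block_sub.
Qed.

Lemma in_colspace_reach_pow k y : in_colspace (reach A G) (A ^+ k *m (G *m y)).
Proof.
rewrite /in_colspace mulmxA trmx_mul.
exact: submx_trans (submxMl _ _) (reach_pow_sub k).
Qed.

Definition noise_free_state (x0 : 'cV[R]_n) (u : nat -> 'cV[R]_m) (t : nat) :=
  A ^+ t *m x0 + \sum_(tau < t) A ^+ (t.-1 - tau) *m (B *m u tau).

Lemma state_traj_noise_free {T : Type} (w : nat -> 'I_l -> T -> R) x0 u t om :
  in_colspace (reach A G)
    (state_traj A B G w x0 u t om - noise_free_state x0 u t).
Proof.
have -> : state_traj A B G w x0 u t om - noise_free_state x0 u t =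
    \sum_(tau < t) A ^+ (t.-1 - tau) *m (G *m noise_vec w tau om).
  rewrite /state_traj /noise_free_state.
  under eq_bigr do rewrite mulmxDr.
  by rewrite big_split /= opprD addrACA subrr add0r addrC addKr.
by apply: in_colspace_sum => tau; apply: in_colspace_reach_pow.
Qed.

End Reachability.

Lemma colspace_coset_inj {F : fieldType} {n N r : nat}
    {M : 'M[F]_(n, N)} {Rm : 'M[F]_(r, n)} {c x y : 'cV[F]_n} :
  (forall v : 'cV[F]_N, Rm *m (M *m v) = 0 -> M *m v = 0) ->
  in_colspace M (x - c) -> in_colspace M (y - c) -> Rm *m x = Rm *m y -> x = y.
Proof.
move=> RM_inj xM yM Rxy; apply/eqP; rewrite -subr_eq0.
have := in_colspaceB M xM yM; rewrite opprB addrA subrK => /in_colspaceP[v xy].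
by rewrite xy; apply/eqP/RM_inj; rewrite -xy mulmxBr Rxy subrr.
Qed.

Theorem lemma3 (R : realType) (d : measure_display) (T : measurableType d)
  (P : probability T R) (n m l r : nat)
  (A : 'M[R]_n) (B : 'M[R]_(n, m)) (G : 'M[R]_(n, l))
  (mu : 'cV[R]_l) (w : nat -> 'I_l -> T -> R)
  (Rm : 'M[R]_(r, n)) :
  iid_gaussian_noise P mu w ->
  (forall v : 'cV[R]_(\sum_(k < n) l),
      Rm *m (reach A G *m v) = 0 -> reach A G *m v = 0) ->
  forall (t : nat) (x0 : 'cV[R]_n) (u : nat -> 'cV[R]_m) (Xbar : set 'cV[R]_n),
    borel_cV Xbar ->
    Xbar `<=` supp P (state_traj A B G w x0 u t) ->
    P [set om | ((fun x => Rm *m x) @` Xbar) (Rm *m state_traj A B G w x0 u t om)] =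
    P [set om | Xbar (state_traj A B G w x0 u t om)].
Proof.
move=> _ RM_inj t x0 u Xbar _ Xbar_supp.
set s := state_traj A B G w x0 u t.
set c := noise_free_state A B x0 u t.
have s_coset om : in_colspace (reach A G) (s om - c).
  exact: state_traj_noise_free.
have Xbar_coset x : Xbar x -> in_colspace (reach A G) (x - c).
  by move=> /Xbar_supp; apply: supp_sub_colspace_coset.
congr (P _); apply/seteqP; split => om /=.
- by case=> x Xx /(colspace_coset_inj RM_inj (Xbar_coset x Xx) (s_coset om)) <-.
- by move=> Xs; exists (s om).
Qed.
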